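(* Let $E\subseteq\omega_1$ be stationary and $T$ an SS Aronszajn tree. Let $\langle x_\alpha:\alpha\in E\rangle$ be a sequence of finite antichains of $T$. Then there is a stationary $E'\subseteq E$ such that $\bigcup_{\alpha\in E'}x_\alpha$ is an antichain of $T$.
   Context: An Aronszajn tree is a tree of height $\omega_1$ all of whose levels and chains are countable. A subset $X\subseteq T$ is stationary if $\{\mathrm{ht}(t):t\in X\}$ is stationary in $\omega_1$. $T$ is SS if every stationary subset of $T$ contains a stationary antichain. *)

(* omega_1 is modelled abstractly as a strictly well-ordered
   type (I, lt) that is uncountable and all of whose proper initial segments
   are countable; this characterizes omega_1 up to order-isomorphism. *)
From Stdlib Require Import List.

Definition countable {X : Type} (P : X -> Prop) : Prop :=
  exists f : X -> nat, forall x y, P x -> P y -> f x = f y -> x = y.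

Definition finite_set {X : Type} (P : X -> Prop) : Prop :=
  exists l : list X, forall x, P x -> In x l.

Definition is_omega1 (I : Type) (lt : I -> I -> Prop) : Prop :=
  (forall a, ~ lt a a) /\
  (forall a b c, lt a b -> lt b c -> lt a c) /\
  (forall a b, a = b \/ lt a b \/ lt b a) /\
  well_founded lt /\
  ~ countable (fun _ : I => True) /\
  (forall a, countable (fun b => lt b a)).

Definition unbounded {I : Type} (lt : I -> I -> Prop) (C : I -> Prop) : Prop :=
  forall a, exists b, lt a b /\ C b.

Definition closed {I : Type} (lt : I -> I -> Prop) (C : I -> Prop) : Prop :=
  forall a, (exists b, lt b a) ->
    (forall b, lt b a -> exists g, lt b g /\ lt g a /\ C g) -> C a.

Definition club {I : Type} (lt : I -> I -> Prop) (C : I -> Prop) : Prop :=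
  closed lt C /\ unbounded lt C.

Definition stationary {I : Type} (lt : I -> I -> Prop) (S : I -> Prop) : Prop :=
  forall C, club lt C -> exists a, S a /\ C a.

(* Trees.  tlt is the strict tree order on T.  [is_height lt tlt t a]:
   the set of tlt-predecessors of t is order-isomorphic (via f) to the
   initial segment {b | lt b a}, i.e. ht(t) = a. *)
Definition is_height {I T : Type} (lt : I -> I -> Prop) (tlt : T -> T -> Prop)
    (t : T) (a : I) : Prop :=
  exists f : T -> I,
    (forall s, tlt s t -> lt (f s) a) /\
    (forall b, lt b a -> exists s, tlt s t /\ f s = b) /\
    (forall s s', tlt s t -> tlt s' t -> f s = f s' -> s = s') /\
    (forall s s', tlt s t -> tlt s' t -> (tlt s s' <-> lt (f s) (f s'))).

Definition chain {T : Type} (tlt : T -> T -> Prop) (X : T -> Prop) : Prop :=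
  forall s t, X s -> X t -> s = t \/ tlt s t \/ tlt t s.

Definition antichain {T : Type} (tlt : T -> T -> Prop) (X : T -> Prop) : Prop :=
  forall s t, X s -> X t -> s <> t -> ~ tlt s t /\ ~ tlt t s.

Definition aronszajn {I T : Type} (lt : I -> I -> Prop) (tlt : T -> T -> Prop)
    : Prop :=
  (forall t, ~ tlt t t) /\
  (forall r s t, tlt r s -> tlt s t -> tlt r t) /\
  (forall t, exists a, is_height lt tlt t a) /\
  (forall a, exists t, is_height lt tlt t a) /\
  (forall a, countable (fun t => is_height lt tlt t a)) /\
  (forall X, chain tlt X -> countable X).

Definition stationary_in_tree {I T : Type} (lt : I -> I -> Prop)
    (tlt : T -> T -> Prop) (X : T -> Prop) : Prop :=
  stationary lt (fun a => exists t, X t /\ is_height lt tlt t a).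

Definition SS {I T : Type} (lt : I -> I -> Prop) (tlt : T -> T -> Prop) : Prop :=
  forall X, stationary_in_tree lt tlt X ->
    exists Y, (forall t, Y t -> X t) /\ antichain tlt Y /\
              stationary_in_tree lt tlt Y.

(* Enumerate each x_a as x_a(0), ..., x_a(n-1), with n fixed on a stationary
   set.  Shrinking the stationary set finitely often (each time by Fodor's
   lemma plus countability of the levels, or by SS) we may assume, for all
   i, j < n: either x_a(i) is one fixed node, or ht x_a(i) >= a and the
   restrictions p_a(i) of x_a(i) to level a form an antichain; and either
   every predecessor of p_a(j) is below p_a(i) for all a, or one node lies
   below every p_a(j) and below no p_a(i).  If now x_a(i) < x_b(j) with
   a <> b, a fixed node would make x_a or x_b itself non-antichain; otherwise,
   say for a < b, p_a(i) < p_b(j), and then either p_a(i) < p_b(i) or the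
   separating node lies below p_a(i) -- both impossible. *)
From Stdlib Require Import List Arith Lia Classical ClassicalEpsilon Cantor.

(** * Countable sets *)

Definition subset {X : Type} (A B : X -> Prop) : Prop := forall x, A x -> B x.

Lemma countable_subset {X : Type} (P Q : X -> Prop) :
  subset P Q -> countable Q -> countable P.
Proof. intros HPQ [e He]. exists e. intros x y Hx Hy. apply He; auto. Qed.

Lemma countable_nat : countable (fun _ : nat => True).
Proof. exists (fun k => k). auto. Qed.

Lemma countable_bigunion {X Y : Type} (P : X -> Prop) (Q : X -> Y -> Prop) :
  countable P -> (forall x, P x -> countable (Q x)) ->
  countable (fun y => exists x, P x /\ Q x y).
Proof.
  intros [e He] HQ.
  destruct (choice (fun x (f : Y -> nat) =>
      P x -> forall y z, Q x y -> Q x z -> f y = f z -> y = z)) as [F HF].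
  { intro x. destruct (classic (P x)) as [Px|nPx].
    - destruct (HQ x Px) as [f Hf]. exists f. intros _. exact Hf.
    - exists (fun _ => 0). tauto. }
  destruct (choice (fun y k => (exists x, P x /\ Q x y) ->
      exists x, P x /\ Q x y /\ k = Cantor.to_nat (e x, F x y))) as [G HG].
  { intro y. destruct (classic (exists x, P x /\ Q x y)) as [[x Hx]|nH].
    - exists (Cantor.to_nat (e x, F x y)). intros _. exists x. tauto.
    - exists 0. tauto. }
  exists G. intros y z Hy Hz Hyz.
  destruct (HG y Hy) as [x [Px [Qxy Ey]]], (HG z Hz) as [x' [Px' [Qx'z Ez]]].
  rewrite Ey, Ez in Hyz. apply Cantor.to_nat_inj in Hyz. injection Hyz as Hx HFx.
  assert (x = x') as <- by (apply He; auto).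
  exact (HF x Px y z Qxy Qx'z HFx).
Qed.

Lemma countable_image {X Y : Type} (P : X -> Prop) (g : X -> Y) :
  countable P -> countable (fun y => exists x, P x /\ g x = y).
Proof.
  intro HP. apply (countable_bigunion P (fun x y => g x = y) HP).
  intros x _. exists (fun _ => 0). intros y z <- <- _. reflexivity.
Qed.

Lemma finite_set_list {X : Type} (P : X -> Prop) :
  finite_set P -> exists l, forall t, In t l <-> P t.
Proof.
  intros [l Hl].
  exists (filter (fun t => if excluded_middle_informative (P t) then true else false) l).
  intro t. rewrite filter_In.
  destruct (excluded_middle_informative (P t)); split; intuition; discriminate.
Qed.

(** * Clubs and stationary subsets of omega_1 *)

Section Omega1.

Variables (I : Type) (lt : I -> I -> Prop).
Hypothesis Hw1 : is_omega1 I lt.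

Definition ile (a b : I) : Prop := lt a b \/ a = b.

Lemma ilt_irrefl a : ~ lt a a.
Proof. destruct Hw1 as [H _]. apply H. Qed.

Lemma ilt_trans a b c : lt a b -> lt b c -> lt a c.
Proof. destruct Hw1 as [_ [H _]]. apply H. Qed.

Lemma ilt_trichotomy a b : a = b \/ lt a b \/ lt b a.
Proof. destruct Hw1 as [_ [_ [H _]]]. apply H. Qed.

Lemma ilt_wf : well_founded lt.
Proof. destruct Hw1 as [_ [_ [_ [H _]]]]. exact H. Qed.

Lemma uncountable : ~ countable (fun _ : I => True).
Proof. destruct Hw1 as [_ [_ [_ [_ [H _]]]]]. exact H. Qed.

Lemma countable_ilt a : countable (fun b => lt b a).
Proof. destruct Hw1 as [_ [_ [_ [_ [_ H]]]]]. apply H. Qed.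

Lemma ile_lt_trans a b c : ile a b -> lt b c -> lt a c.
Proof. intros [Hab| ->] Hbc; [exact (ilt_trans _ _ _ Hab Hbc)|exact Hbc]. Qed.

Lemma not_lt_ile a b : ~ lt a b -> ile b a.
Proof. intro H. destruct (ilt_trichotomy a b) as [->|[Hab|Hba]]; unfold ile; tauto. Qed.

Lemma ilt_upper_of_two b c l :
  lt b l -> lt c l -> exists m, lt m l /\ ile b m /\ ile c m.
Proof.
  intros Hb Hc. unfold ile.
  destruct (ilt_trichotomy b c) as [<-|[H|H]]; [exists b|exists c|exists b]; auto.
Qed.

Lemma countable_ile a : countable (fun b => ile b a).
Proof.
  destruct (countable_ilt a) as [e He].
  exists (fun b => if excluded_middle_informative (b = a) then 0 else S (e b)).
  intros b c Hb Hc.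
  destruct (excluded_middle_informative (b = a)), (excluded_middle_informative (c = a));
    cbn; intro E; try congruence.
  injection E as E. apply He; auto; [destruct Hb|destruct Hc]; tauto.
Qed.

Lemma countable_bounded (P : I -> Prop) :
  countable P -> exists c, forall b, P b -> lt b c.
Proof.
  intro HP. apply NNPP. intro Hno. apply uncountable.
  apply (countable_subset _ (fun c => exists b, P b /\ ile c b)).
  - intros c _. apply NNPP. intro Hc. apply Hno. exists c. intros b Pb.
    apply NNPP. intro Hbc. apply Hc. exists b. split; [exact Pb|].
    apply not_lt_ile, Hbc.
  - apply (countable_bigunion P (fun b c => ile c b) HP).
    intros b _. apply countable_ile.
Qed.

Lemma exists_gt a : exists b, lt a b.
Proof.
  destruct (countable_bounded (fun b => b = a)) as [b Hb].
  - exists (fun _ => 0). intros ? ? -> -> _. reflexivity.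
  - exists b. auto.
Qed.

Lemma least_element (P : I -> Prop) :
  (exists x, P x) -> exists m, P m /\ forall y, P y -> ~ lt y m.
Proof.
  intros [x Px]. apply NNPP. intro Hno. revert Px.
  induction x as [x IH] using (well_founded_ind ilt_wf). intro Px.
  apply Hno. exists x. split; [exact Px|]. intros y Py Hyx. exact (IH y Hyx Py).
Qed.

(* l is the least strict upper bound of the sequence s with s 0 = a and
   s (k+1) bounding g on everything up to s k. *)
Lemma closure_point (g : I -> I) a :
  exists l, lt a l /\ forall b, lt b l -> lt (g b) l.
Proof.
  destruct (choice (fun c d => forall b, ile b c -> lt (g b) d)) as [h Hh].
  { intro c.
    destruct (countable_bounded _ (countable_image _ g (countable_ile c))) as [d Hd].
    exists d. intros b Hb. apply Hd. eauto. }
  set (s := fix s k := match k with 0 => a | S k => h (s k) end).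
  destruct (least_element (fun l => forall k, lt (s k) l)) as [l [Hl Hmin]].
  { destruct (countable_bounded _ (countable_image _ s countable_nat)) as [u Hu].
    exists u. intro k. apply Hu. eauto. }
  exists l. split; [exact (Hl 0)|]. intros b Hb.
  assert (Hk : exists k, ile b (s k)).
  { apply NNPP. intro Hno. apply (Hmin b); [|exact Hb]. intro k.
    apply NNPP. intro Hkb. apply Hno. exists k. apply not_lt_ile, Hkb. }
  destruct Hk as [k Hk].
  exact (ilt_trans _ (s (S k)) _ (Hh (s k) b Hk) (Hl (S k))).
Qed.

Lemma club_full : club lt (fun _ => True).
Proof.
  split; [intros a _ _; constructor|].
  intro a. destruct (exists_gt a) as [b Hb]. eauto.
Qed.

Lemma club_countable_inter (C : nat -> I -> Prop) :
  (forall n, club lt (C n)) -> club lt (fun a => forall n, C n a).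
Proof.
  intro HC. split.
  - intros a Ha Hcof n. apply (proj1 (HC n) a Ha).
    intros b Hb. destruct (Hcof b Hb) as [c [Hbc [Hca Hc]]]. eauto.
  - intro a.
    destruct (choice (fun (nb : nat * I) c => lt (snd nb) c /\ C (fst nb) c)) as [f Hf].
    { intros [n b]. apply (proj2 (HC n)). }
    destruct (choice (fun b d => forall n, lt (f (n, b)) d)) as [g Hg].
    { intro b.
      destruct (countable_bounded _
        (countable_image _ (fun n => f (n, b)) countable_nat)) as [d Hd].
      exists d. intro n. apply Hd. eauto. }
    destruct (closure_point g a) as [l [Hal Hl]].
    exists l. split; [exact Hal|]. intro n. apply (proj1 (HC n) l); [eauto|].
    intros b Hb. destruct (Hf (n, b)) as [Hbf Hcf].
    exists (f (n, b)). repeat split; auto.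
    exact (ilt_trans _ _ _ (Hg b n) (Hl b Hb)).
Qed.

Lemma club_inter (C D : I -> Prop) :
  club lt C -> club lt D -> club lt (fun a => C a /\ D a).
Proof.
  intros HC HD.
  destruct (club_countable_inter (fun n => match n with 0 => C | _ => D end))
    as [Hcl Hun]; [intros [|]; assumption|].
  split.
  - intros a Ha Hcof.
    assert (Hall : forall n, (match n with 0 => C | _ => D end) a).
    { apply (Hcl a Ha). intros b Hb. destruct (Hcof b Hb) as [c [Hbc [Hca [Cc Dc]]]].
      exists c. repeat split; auto. intros [|]; assumption. }
    exact (conj (Hall 0) (Hall 1)).
  - intro a. destruct (Hun a) as [b [Hab Hb]].
    exists b. exact (conj Hab (conj (Hb 0) (Hb 1))).
Qed.

Lemma club_diagonal_inter (C : I -> I -> Prop) :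
  (forall c, club lt (C c)) -> club lt (fun a => forall c, lt c a -> C c a).
Proof.
  intro HC. split.
  - intros a Ha Hcof c Hc. apply (proj1 (HC c) a Ha). intros b Hb.
    destruct (ilt_upper_of_two b c a Hb Hc) as [m [Hm [Hbm Hcm]]].
    destruct (Hcof m Hm) as [d [Hmd [Hda Hd]]].
    exists d. repeat split; [exact (ile_lt_trans _ _ _ Hbm Hmd)|exact Hda|].
    apply Hd. exact (ile_lt_trans _ _ _ Hcm Hmd).
  - intro a.
    destruct (choice (fun (cb : I * I) d => lt (snd cb) d /\ C (fst cb) d)) as [f Hf].
    { intros [c b]. apply (proj2 (HC c)). }
    destruct (choice (fun b d => forall c, ile c b -> lt (f (c, b)) d)) as [g Hg].
    { intro b.
      destruct (countable_bounded _
        (countable_image _ (fun c => f (c, b)) (countable_ile b))) as [d Hd].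
      exists d. intros c Hc. apply Hd. eauto. }
    destruct (closure_point g a) as [l [Hal Hl]].
    exists l. split; [exact Hal|]. intros c Hc. apply (proj1 (HC c) l); [eauto|].
    intros b Hb. destruct (ilt_upper_of_two b c l Hb Hc) as [m [Hm [Hbm Hcm]]].
    destruct (Hf (c, m)) as [Hmf Hcf].
    exists (f (c, m)). repeat split; [exact (ile_lt_trans _ _ _ Hbm Hmf)| |exact Hcf].
    exact (ilt_trans _ _ _ (Hg m c Hcm) (Hl m Hm)).
Qed.

Lemma stationary_mono (S S' : I -> Prop) :
  subset S S' -> stationary lt S -> stationary lt S'.
Proof. intros HSS' HS C HC. destruct (HS C HC) as [a [Sa Ca]]. eauto. Qed.

Lemma stationary_nonempty S : stationary lt S -> exists a, S a.
Proof. intro HS. destruct (HS _ club_full) as [a [Sa _]]. eauto. Qed.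

Lemma nonstationary_club S :
  ~ stationary lt S -> exists C, club lt C /\ forall a, C a -> ~ S a.
Proof.
  intro H. apply NNPP. intro Hno. apply H. intros C HC.
  apply NNPP. intro HCS. apply Hno. exists C. split; [exact HC|].
  intros a Ca Sa. eauto.
Qed.

Lemma stationary_pigeonhole S (f : I -> nat) :
  stationary lt S -> exists n, stationary lt (fun a => S a /\ f a = n).
Proof.
  intro HS. apply NNPP. intro Hno.
  destruct (choice (fun n C => club lt C /\ forall a, C a -> ~ (S a /\ f a = n)))
    as [C HC].
  { intro n. apply nonstationary_club. intro. apply Hno. eauto. }
  destruct (HS _ (club_countable_inter C (fun n => proj1 (HC n)))) as [a [Sa Ca]].
  exact (proj2 (HC (f a)) a (Ca (f a)) (conj Sa eq_refl)).
Qed.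

Lemma pressing_down S (g : I -> I) :
  stationary lt S -> (forall a, S a -> lt (g a) a) ->
  exists c, stationary lt (fun a => S a /\ g a = c).
Proof.
  intros HS Hg. apply NNPP. intro Hno.
  destruct (choice (fun c C => club lt C /\ forall a, C a -> ~ (S a /\ g a = c)))
    as [C HC].
  { intro c. apply nonstationary_club. intro. apply Hno. eauto. }
  destruct (HS _ (club_diagonal_inter C (fun c => proj1 (HC c)))) as [a [Sa Ca]].
  exact (proj2 (HC (g a)) a (Ca (g a) (Hg a Sa)) (conj Sa eq_refl)).
Qed.

Lemma pressing_down_countable_fibres {X : Type} S (f : I -> X) (rank : X -> I) :
  stationary lt S -> (forall a, S a -> lt (rank (f a)) a) ->
  (forall c, countable (fun y => rank y = c)) ->
  exists y, stationary lt (fun a => S a /\ f a = y).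
Proof.
  intros HS Hreg Hfib.
  destruct (pressing_down S (fun a => rank (f a)) HS Hreg) as [c Hc].
  destruct (Hfib c) as [e He].
  destruct (stationary_pigeonhole _ (fun a => e (f a)) Hc) as [k Hk].
  destruct (stationary_nonempty _ Hk) as [a1 [[Sa1 Ea1] Ka1]].
  exists (f a1). eapply stationary_mono; [|exact Hk].
  intros a [[Sa Ea] Ka]. split; [exact Sa|]. apply He; congruence.
Qed.

Lemma stationary_split S (A : I -> Prop) : stationary lt S ->
  stationary lt (fun a => S a /\ A a) \/ stationary lt (fun a => S a /\ ~ A a).
Proof.
  intro HS. destruct (classic (stationary lt (fun a => S a /\ A a))) as [H|H];
    [left; exact H|right].
  intros C HC. destruct (nonstationary_club _ H) as [D [HD HDA]].
  destruct (HS _ (club_inter _ _ HC HD)) as [a [Sa [Ca Da]]].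
  exists a. split; [|exact Ca]. split; [exact Sa|]. intro Aa. exact (HDA a Da (conj Sa Aa)).
Qed.

Lemma stationary_finite_enumeration {X : Type} (x0 : X) S (x : I -> X -> Prop) :
  stationary lt S -> (forall a, S a -> finite_set (x a)) ->
  exists S' n (v : I -> nat -> X), subset S' S /\ stationary lt S' /\
    forall a, S' a -> (forall i, i < n -> x a (v a i)) /\
                      (forall t, x a t -> exists i, i < n /\ v a i = t).
Proof.
  intros HS Hfin.
  destruct (choice (fun a l => S a -> forall t, In t l <-> x a t)) as [l Hl].
  { intro a. destruct (classic (S a)) as [Sa|nSa].
    - destruct (finite_set_list _ (Hfin a Sa)) as [l Hl]. eauto.
    - exists nil. tauto. }
  destruct (stationary_pigeonhole S (fun a => length (l a)) HS) as [n Hn].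
  exists (fun a => S a /\ length (l a) = n), n, (fun a i => nth i (l a) x0).
  split; [intros a [Sa _]; exact Sa|]. split; [exact Hn|].
  intros a [Sa La]. split.
  - intros i Hi. apply (Hl a Sa). apply nth_In. lia.
  - intros t Ht. apply (Hl a Sa) in Ht.
    destruct (In_nth _ _ x0 Ht) as [i [Hi Ei]]. exists i. split; [lia|exact Ei].
Qed.

Definition hereditary (Q : (I -> Prop) -> Prop) : Prop :=
  forall A B, subset B A -> Q A -> Q B.

Definition dense_below (S : I -> Prop) (Q : (I -> Prop) -> Prop) : Prop :=
  forall A, subset A S -> stationary lt A ->
    exists B, subset B A /\ stationary lt B /\ Q B.

Lemma dense_below_impl (P : Prop) S Q :
  (P -> dense_below S Q) -> dense_below S (fun B => P -> Q B).
Proof.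
  intros H A HAS HA. destruct (classic P) as [HP|HnP].
  - destruct (H HP A HAS HA) as [B [HBA [HB HQ]]]. exists B. auto.
  - exists A. split; [intros a Aa; exact Aa|]. split; [exact HA|]. tauto.
Qed.

Lemma dense_below_forall_lt S (Q : nat -> (I -> Prop) -> Prop) m :
  (forall k, hereditary (Q k)) -> (forall k, k < m -> dense_below S (Q k)) ->
  dense_below S (fun B => forall k, k < m -> Q k B).
Proof.
  intros Hher. induction m as [|m IH]; intros Hdense A HAS HA.
  - exists A. split; [intros a Aa; exact Aa|]. split; [exact HA|]. intros k Hk. lia.
  - destruct (IH (fun k Hk => Hdense k (Nat.lt_lt_succ_r _ _ Hk)) A HAS HA)
      as [B [HBA [HB HQB]]].
    destruct (Hdense m (Nat.lt_succ_diag_r m) B (fun a Ba => HAS a (HBA a Ba)) HB)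
      as [B' [HB'B [HB' HQB']]].
    exists B'. split; [intros a Ba; exact (HBA a (HB'B a Ba))|]. split; [exact HB'|].
    intros k Hk. destruct (Nat.eq_dec k m) as [->|Hne]; [exact HQB'|].
    apply (Hher k B B' HB'B). apply HQB. lia.
Qed.

Lemma hereditary_impl (P : Prop) Q : hereditary Q -> hereditary (fun B => P -> Q B).
Proof. intros HQ A B HBA H HP. exact (HQ A B HBA (H HP)). Qed.

Lemma hereditary_forall_lt m (Q : nat -> (I -> Prop) -> Prop) :
  (forall k, hereditary (Q k)) -> hereditary (fun B => forall k, k < m -> Q k B).
Proof. intros HQ A B HBA H k Hk. exact (HQ k A B HBA (H k Hk)). Qed.

(** * Heights in the tree *)

Section Tree.

Variables (T : Type) (tlt : T -> T -> Prop).
Hypothesis HA : aronszajn lt tlt.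
Variable ht : T -> I.
Hypothesis ht_spec : forall t, is_height lt tlt t (ht t).

Lemma tlt_irrefl t : ~ tlt t t.
Proof. destruct HA as [H _]. apply H. Qed.

Lemma tlt_trans r s t : tlt r s -> tlt s t -> tlt r t.
Proof. destruct HA as [_ [H _]]. apply H. Qed.

Definition tle (s t : T) : Prop := tlt s t \/ s = t.

Definition height_map (t : T) (a : I) (f : T -> I) : Prop :=
  (forall s, tlt s t -> lt (f s) a) /\
  (forall b, lt b a -> exists s, tlt s t /\ f s = b) /\
  (forall s s', tlt s t -> tlt s' t -> f s = f s' -> s = s') /\
  (forall s s', tlt s t -> tlt s' t -> (tlt s s' <-> lt (f s) (f s'))).

Lemma height_map_pred t a f s : height_map t a f -> tlt s t -> height_map s (f s) f.
Proof.
  intros [f_lt [f_onto [f_inj f_iso]]] Hs. repeat split.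
  - intros r Hr. apply f_iso; eauto using tlt_trans.
  - intros b Hb. destruct (f_onto b (ilt_trans _ _ _ Hb (f_lt s Hs))) as [r [Hr <-]].
    exists r. split; [|reflexivity]. apply f_iso; auto.
  - intros r r' Hr Hr'. apply f_inj; eauto using tlt_trans.
  - intro Hrr. apply f_iso; eauto using tlt_trans.
  - intro Hrr. apply f_iso; eauto using tlt_trans.
Qed.

Lemma height_maps_agree t a b f g :
  height_map t a f -> height_map t b g -> forall s, tlt s t -> f s = g s.
Proof.
  intros [f_lt [f_onto [f_inj f_iso]]] [g_lt [g_onto [g_inj g_iso]]].
  enough (H : forall c s, tlt s t -> f s = c -> f s = g s) by eauto.
  intro c. induction c as [c IH] using (well_founded_ind ilt_wf). intros s Hs <-.
  destruct (ilt_trichotomy (f s) (g s)) as [E|[Hfg|Hgf]]; [exact E| |]; exfalso.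
  - destruct (g_onto (f s) (ilt_trans _ _ _ Hfg (g_lt s Hs))) as [r [Hr Er]].
    assert (Hfr : lt (f r) (f s)).
    { apply f_iso; auto. apply g_iso; auto. rewrite Er. exact Hfg. }
    rewrite (IH _ Hfr r Hr eq_refl), Er in Hfr. exact (ilt_irrefl _ Hfr).
  - destruct (f_onto (g s) (ilt_trans _ _ _ Hgf (f_lt s Hs))) as [r [Hr Er]].
    assert (Hfr : lt (f r) (f s)) by (rewrite Er; exact Hgf).
    assert (r = s) as ->.
    { apply g_inj; auto. rewrite <- (IH _ Hfr r Hr eq_refl). exact Er. }
    rewrite Er in Hgf. exact (ilt_irrefl _ Hgf).
Qed.

Lemma height_unique t a b : is_height lt tlt t a -> is_height lt tlt t b -> a = b.
Proof.
  assert (no_lt : forall a b f g, height_map t a f -> height_map t b g -> ~ lt a b).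
  { intros a' b' f g Hf Hg Hab.
    destruct (proj1 (proj2 Hg) a' Hab) as [s [Hs Es]].
    pose proof (proj1 Hf s Hs) as Hfs.
    rewrite (height_maps_agree t a' b' f g Hf Hg s Hs), Es in Hfs.
    exact (ilt_irrefl _ Hfs). }
  intros [f Hf] [g Hg].
  destruct (ilt_trichotomy a b) as [E|[Hab|Hba]]; [exact E| |]; exfalso.
  - exact (no_lt a b f g Hf Hg Hab).
  - exact (no_lt b a g f Hg Hf Hba).
Qed.

Lemma ht_unique t a : is_height lt tlt t a -> ht t = a.
Proof. exact (height_unique t _ _ (ht_spec t)). Qed.

Lemma ht_pred t a f s : height_map t a f -> tlt s t -> ht s = f s.
Proof. intros Hf Hs. apply ht_unique. exists f. exact (height_map_pred t a f s Hf Hs). Qed.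

Lemma ht_lt s t : tlt s t -> lt (ht s) (ht t).
Proof.
  intro Hs. destruct (ht_spec t) as [f Hf].
  rewrite (ht_pred t _ f s Hf Hs). exact (proj1 Hf s Hs).
Qed.

Lemma tlt_of_ht_lt s s' w : tle s w -> tle s' w -> lt (ht s) (ht s') -> tlt s s'.
Proof.
  intros [Hs| <-] [Hs'| <-] H.
  - destruct (ht_spec w) as [f Hf].
    rewrite (ht_pred w _ f s Hf Hs), (ht_pred w _ f s' Hf Hs') in H.
    exact (proj2 (proj2 (proj2 (proj2 Hf)) s s' Hs Hs') H).
  - exact Hs.
  - exfalso. exact (ilt_irrefl _ (ilt_trans _ _ _ H (ht_lt _ _ Hs'))).
  - exfalso. exact (ilt_irrefl _ H).
Qed.

Lemma tle_at_level t b : ile b (ht t) -> exists s, tle s t /\ ht s = b.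
Proof.
  intros [Hb| ->]; [|exists t; split; [right|]; reflexivity].
  destruct (ht_spec t) as [f Hf]. destruct (proj1 (proj2 Hf) b Hb) as [s [Hs Es]].
  exists s. split; [left; exact Hs|]. rewrite (ht_pred t _ f s Hf Hs). exact Es.
Qed.

Lemma restriction_exists : exists r : T -> I -> T,
  forall t a, ile a (ht t) -> tle (r t a) t /\ ht (r t a) = a.
Proof.
  destruct (choice (fun (ta : T * I) s =>
      ile (snd ta) (ht (fst ta)) -> tle s (fst ta) /\ ht s = snd ta)) as [r Hr].
  { intros [t a]. destruct (classic (ile a (ht t))) as [Ha|Ha].
    - destruct (tle_at_level t a Ha) as [s Hs]. exists s. auto.
    - exists t. tauto. }
  exists (fun t a => r (t, a)). intros t a. exact (Hr (t, a)).
Qed.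

Lemma level_countable a : countable (fun t => ht t = a).
Proof.
  destruct HA as [_ [_ [_ [_ [H _]]]]].
  eapply countable_subset; [|exact (H a)]. intros t <-. apply ht_spec.
Qed.

(** * Uniformizing the antichains on a stationary set *)

Definition constant_on (B : I -> Prop) (f : I -> T) : Prop :=
  exists u, forall a, B a -> f a = u.

Definition reaches_level (B : I -> Prop) (f : I -> T) : Prop :=
  forall a, B a -> ile a (ht (f a)).

Definition antichain_on (B : I -> Prop) (f : I -> T) : Prop :=
  forall a b, B a -> B b -> a <> b -> ~ tlt (f a) (f b).

Definition preds_included_or_separated (B : I -> Prop) (f g : I -> T) : Prop :=
  (forall a, B a -> forall s, tlt s (g a) -> tlt s (f a)) \/
  (exists c, forall a, B a -> tlt c (g a) /\ ~ tlt c (f a)).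

Lemma constant_or_reaches_level_hereditary f :
  hereditary (fun B => constant_on B f \/ reaches_level B f).
Proof.
  intros A B HBA [[u Hu]|Hr]; [left; exists u|right]; intros a Ba;
    [apply Hu|apply Hr]; exact (HBA a Ba).
Qed.

Lemma antichain_on_hereditary f : hereditary (fun B => antichain_on B f).
Proof. intros A B HBA H a b Ba Bb. exact (H a b (HBA a Ba) (HBA b Bb)). Qed.

Lemma preds_included_or_separated_hereditary f g :
  hereditary (fun B => preds_included_or_separated B f g).
Proof.
  intros A B HBA [H|[c H]]; [left|right; exists c]; intros a Ba; exact (H a (HBA a Ba)).
Qed.

Lemma constant_or_reaches_level_dense S f :
  dense_below S (fun B => constant_on B f \/ reaches_level B f).
Proof.
  intros A _ HAs.
  destruct (stationary_split A (fun a => lt (ht (f a)) a) HAs) as [Hlow|Hhigh].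
  - destruct (pressing_down_countable_fibres _ f ht Hlow (fun a Ha => proj2 Ha)
      level_countable) as [u Hu].
    exists (fun a => (A a /\ lt (ht (f a)) a) /\ f a = u).
    split; [intros a [[Aa _] _]; exact Aa|]. split; [exact Hu|].
    left. exists u. intros a [_ E]. exact E.
  - exists (fun a => A a /\ ~ lt (ht (f a)) a).
    split; [intros a [Aa _]; exact Aa|]. split; [exact Hhigh|].
    right. intros a [_ Ha]. exact (not_lt_ile _ _ Ha).
Qed.

Lemma antichain_on_dense (HSS : SS lt tlt) S f :
  (forall a, S a -> ht (f a) = a) -> dense_below S (fun B => antichain_on B f).
Proof.
  intros Hf A HAS HAs.
  destruct (HSS (fun t => exists a, A a /\ f a = t)) as [Y [HYX [HY HYstat]]].
  { eapply stationary_mono; [|exact HAs]. intros a Aa.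
    exists (f a). split; [eauto|]. rewrite <- (Hf a (HAS a Aa)) at 2. apply ht_spec. }
  exists (fun a => A a /\ Y (f a)). split; [intros a [Aa _]; exact Aa|]. split.
  - eapply stationary_mono; [|exact HYstat]. intros b [t [Yt Hb]].
    destruct (HYX t Yt) as [a [Aa <-]].
    rewrite <- (ht_unique _ _ Hb), (Hf a (HAS a Aa)). exact (conj Aa Yt).
  - intros a b [Aa Ya] [Ab Yb] Hab. refine (proj1 (HY _ _ Ya Yb _)).
    intro E. apply Hab. rewrite <- (Hf a (HAS a Aa)), <- (Hf b (HAS b Ab)), E.
    reflexivity.
Qed.

Lemma preds_included_or_separated_dense S f g :
  (forall a, S a -> ht (g a) = a) ->
  dense_below S (fun B => preds_included_or_separated B f g).
Proof.
  intros Hg A HAS HAs.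
  set (incl := fun a => forall s, tlt s (g a) -> tlt s (f a)).
  destruct (stationary_split A incl HAs) as [Hin|Hout].
  - exists (fun a => A a /\ incl a). split; [intros a [Aa _]; exact Aa|].
    split; [exact Hin|]. left. intros a [_ H]. exact H.
  - destruct (choice (fun a c => ~ incl a -> tlt c (g a) /\ ~ tlt c (f a))) as [c Hc].
    { intro a. destruct (classic (incl a)) as [Ha|Ha]; [exists (f a); tauto|].
      apply NNPP. intro H. apply Ha. intros s Hs. apply NNPP. intro Hn.
      apply H. exists s. auto. }
    assert (Hreg : forall a, A a /\ ~ incl a -> lt (ht (c a)) a).
    { intros a [Aa Ha]. rewrite <- (Hg a (HAS a Aa)) at 2. apply ht_lt, Hc, Ha. }
    destruct (pressing_down_countable_fibres _ c ht Hout Hreg level_countable) as [d Hd].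
    exists (fun a => (A a /\ ~ incl a) /\ c a = d).
    split; [intros a [[Aa _] _]; exact Aa|]. split; [exact Hd|].
    right. exists d. intros a [[_ Ha] <-]. exact (Hc a Ha).
Qed.

Lemma levels_incomparable B f g :
  (forall a, B a -> ht (f a) = a) -> (forall a, B a -> ht (g a) = a) ->
  antichain_on B f -> preds_included_or_separated B f g ->
  forall a b, B a -> B b -> ~ tlt (f a) (g b).
Proof.
  intros Hf Hg Hanti [Hincl|[c Hc]] a b Ba Bb Hlt.
  - apply (Hanti a b Ba Bb); [|exact (Hincl b Bb _ Hlt)].
    intros <-. pose proof (ht_lt _ _ Hlt) as H.
    rewrite (Hf a Ba), (Hg a Ba) in H. exact (ilt_irrefl _ H).
  - destruct (Hc a Ba) as [Hca Hnca]. apply Hnca.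
    apply (tlt_of_ht_lt c (f a) (g b));
      [left; exact (proj1 (Hc b Bb))|left; exact Hlt|].
    rewrite (Hf a Ba), <- (Hg a Ba) at 1. exact (ht_lt _ _ Hca).
Qed.

Lemma union_no_tlt_of_uniform (B : I -> Prop) n (v p : I -> nat -> T)
    (high : nat -> Prop) :
  (forall a i j, B a -> i < n -> j < n -> ~ tlt (v a i) (v a j)) ->
  (forall i, i < n -> ~ high i -> constant_on B (fun a => v a i)) ->
  (forall a i, B a -> high i -> tle (p a i) (v a i) /\ ht (p a i) = a) ->
  (forall i, i < n -> high i -> antichain_on B (fun a => p a i)) ->
  (forall i j, i < n -> j < n -> high i -> high j ->
     preds_included_or_separated B (fun a => p a i) (fun a => p a j)) ->
  forall a b i j, B a -> B b -> i < n -> j < n -> ~ tlt (v a i) (v b j).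
Proof.
  intros Hv Hlow Hp Hanti Hsep a b i j Ba Bb Hi Hj Hlt.
  destruct (classic (high i)) as [Hhi|Hlo].
  2:{ destruct (Hlow i Hi Hlo) as [u Hu]. cbv beta in Hu.
      apply (Hv b i j Bb Hi Hj). rewrite (Hu b Bb), <- (Hu a Ba). exact Hlt. }
  destruct (classic (high j)) as [Hhj|Hlo].
  2:{ destruct (Hlow j Hj Hlo) as [u Hu]. cbv beta in Hu.
      apply (Hv a i j Ba Hi Hj). rewrite (Hu a Ba), <- (Hu b Bb). exact Hlt. }
  destruct (Hp a i Ba Hhi) as [Hpa Ea], (Hp b j Bb Hhj) as [Hpb Eb].
  assert (Hpa' : tle (p a i) (v b j)).
  { left. destruct Hpa as [H| ->]; [exact (tlt_trans _ _ _ H Hlt)|exact Hlt]. }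
  destruct (ilt_trichotomy a b) as [<-|[Hab|Hba]].
  - exact (Hv a i j Ba Hi Hj Hlt).
  - apply (levels_incomparable B (fun a => p a i) (fun a => p a j)
      (fun a Ba => proj2 (Hp a i Ba Hhi)) (fun a Ba => proj2 (Hp a j Ba Hhj))
      (Hanti i Hi Hhi) (Hsep i j Hi Hj Hhi Hhj) a b Ba Bb).
    apply (tlt_of_ht_lt _ _ _ Hpa' Hpb). rewrite Ea, Eb. exact Hab.
  - apply (levels_incomparable B (fun a => p a j) (fun a => p a i)
      (fun a Ba => proj2 (Hp a j Ba Hhj)) (fun a Ba => proj2 (Hp a i Ba Hhi))
      (Hanti j Hj Hhj) (Hsep j i Hj Hi Hhj Hhi) b a Bb Ba).
    apply (tlt_of_ht_lt _ _ _ Hpb Hpa'). rewrite Eb, Ea. exact Hba.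
Qed.

Section Levels.

Variables (S : I -> Prop) (n : nat) (p : I -> nat -> T) (high : nat -> Prop).
Hypothesis p_level : forall a i, S a -> high i -> ht (p a i) = a.

Lemma antichain_levels_dense (HSS : SS lt tlt) :
  dense_below S (fun B => forall i, i < n -> high i -> antichain_on B (fun a => p a i)).
Proof.
  apply dense_below_forall_lt.
  - intro i. apply hereditary_impl, antichain_on_hereditary.
  - intros i _. apply dense_below_impl. intro Hi.
    apply (antichain_on_dense HSS). intros a Sa. exact (p_level a i Sa Hi).
Qed.

Lemma separated_levels_dense :
  dense_below S (fun B => forall i, i < n -> forall j, j < n -> high i -> high j ->
    preds_included_or_separated B (fun a => p a i) (fun a => p a j)).
Proof.
  assert (Hher : forall i j, hereditary (fun B => high i -> high j ->
            preds_included_or_separated B (fun a => p a i) (fun a => p a j))).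
  { intros i j. apply hereditary_impl, hereditary_impl.
    apply preds_included_or_separated_hereditary. }
  apply dense_below_forall_lt.
  - intro i. apply hereditary_forall_lt, Hher.
  - intros i _. apply dense_below_forall_lt; [exact (Hher i)|].
    intros j _. apply dense_below_impl. intros _. apply dense_below_impl. intro Hj.
    apply preds_included_or_separated_dense. intros a Sa. exact (p_level a j Sa Hj).
Qed.

End Levels.

Lemma stationary_union_antichain (HSS : SS lt tlt) S n (v : I -> nat -> T) :
  stationary lt S ->
  (forall a i j, S a -> i < n -> j < n -> ~ tlt (v a i) (v a j)) ->
  exists S', subset S' S /\ stationary lt S' /\
    forall a b i j, S' a -> S' b -> i < n -> j < n -> ~ tlt (v a i) (v b j).
Proof.
  intros HS Hv.
  assert (Hdense1 : dense_below S (fun B => forall i, i < n ->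
            constant_on B (fun a => v a i) \/ reaches_level B (fun a => v a i))).
  { apply dense_below_forall_lt.
    - intro i. apply constant_or_reaches_level_hereditary.
    - intros i _. apply constant_or_reaches_level_dense. }
  destruct (Hdense1 S (fun a Sa => Sa) HS) as [S1 [HS1S [HS1 HQ1]]].
  set (high := fun i => reaches_level S1 (fun a => v a i)).
  destruct restriction_exists as [r Hr].
  set (p := fun a i => r (v a i) a).
  assert (Hp : forall a i, S1 a -> high i -> tle (p a i) (v a i) /\ ht (p a i) = a)
    by (intros a i Sa Hi; exact (Hr _ _ (Hi a Sa))).
  assert (p_level : forall a i, S1 a -> high i -> ht (p a i) = a)
    by (intros a i Sa Hi; exact (proj2 (Hp a i Sa Hi))).
  destruct (antichain_levels_dense S1 n p high p_level HSS S1 (fun a Sa => Sa) HS1)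
    as [S2 [HS2S1 [HS2 HQ2]]].
  destruct (separated_levels_dense S1 n p high p_level S2 HS2S1 HS2)
    as [S3 [HS3S2 [HS3 HQ3]]].
  assert (HS3S1 : subset S3 S1) by (intros a Sa; exact (HS2S1 a (HS3S2 a Sa))).
  exists S3. split; [intros a Sa; exact (HS1S a (HS3S1 a Sa))|]. split; [exact HS3|].
  apply (union_no_tlt_of_uniform S3 n v p high).
  - intros a i j Sa. exact (Hv a i j (HS1S a (HS3S1 a Sa))).
  - intros i Hi Hlo. destruct (HQ1 i Hi) as [[u Hu]|Hhi]; [|contradiction].
    exists u. intros a Sa. exact (Hu a (HS3S1 a Sa)).
  - intros a i Sa. exact (Hp a i (HS3S1 a Sa)).
  - intros i Hi Hhi. exact (antichain_on_hereditary _ S2 S3 HS3S2 (HQ2 i Hi Hhi)).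
  - intros i j Hi Hj. exact (HQ3 i Hi j Hj).
Qed.

End Tree.

End Omega1.

Theorem lemma4 (I : Type) (lt : I -> I -> Prop) (T : Type)
  (tlt : T -> T -> Prop)
  (Hw1 : is_omega1 I lt) (HA : aronszajn lt tlt) (HSS : SS lt tlt)
  (E : I -> Prop) (HE : stationary lt E)
  (x : I -> T -> Prop)
  (Hx : forall a, E a -> finite_set (x a) /\ antichain tlt (x a)) :
  exists E' : I -> Prop,
    (forall a, E' a -> E a) /\ stationary lt E' /\
    antichain tlt (fun t => exists a, E' a /\ x a t).
Proof.
  pose proof HA as (_ & _ & Hheight & Hlevel & _).
  destruct (choice _ Hheight) as [ht Hht].
  destruct (stationary_nonempty I lt Hw1 E HE) as [a0 _].
  destruct (Hlevel a0) as [t0 _].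
  destruct (stationary_finite_enumeration I lt Hw1 t0 E x HE (fun a Ea => proj1 (Hx a Ea)))
    as (S & n & v & HSE & HS & Hv).
  destruct (stationary_union_antichain I lt Hw1 T tlt HA ht Hht HSS S n v HS)
    as (E' & HE'S & HE' & Hno).
  { intros a i j Sa Hi Hj Hlt. destruct (Hv a Sa) as [Hin _].
    refine (proj1 (proj2 (Hx a (HSE a Sa)) _ _ (Hin i Hi) (Hin j Hj) _) Hlt).
    intro Eij. rewrite Eij in Hlt. exact (tlt_irrefl I lt T tlt HA _ Hlt). }
  exists E'. split; [intros a Ea; exact (HSE a (HE'S a Ea))|]. split; [exact HE'|].
  intros t t' [a [Ea Ht]] [b [Eb Ht']] _.
  destruct (proj2 (Hv a (HE'S a Ea)) t Ht) as [i [Hi <-]].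
  destruct (proj2 (Hv b (HE'S b Eb)) t' Ht') as [j [Hj <-]].
  split; [exact (Hno a b i j Ea Eb Hi Hj)|exact (Hno b a j i Eb Ea Hj Hi)].
Qed.
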